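(* Fix an integer $D\ge 21$. For a positive integer $n$, let $k=k(n)=\left\lceil \frac{3n\ln D}{D}\right\rceil$. Then the proportion of configurations $F\in\mathcal{F}_D(n)$ for which the multigraph $\pi(F)$ has an induced matching of size $k$ tends to $0$ as $n\to\infty$.
   Context: Let $n,D$ be positive integers and let $V_n=\{v_1,\dots,v_{nD}\}$ and $W_n=\{w_1,\dots,w_{nD}\}$ be disjoint sets. A configuration (of order $n$ and degree $D$) is a perfect matching between $V_n$ and $W_n$ (each edge has one end in $V_n$ and one in $W_n$); $\mathcal{F}_D(n)$ is the set of all $(Dn)!$ configurations. For $F\in\mathcal{F}_D(n)$, $\pi(F)$ is the $D$-regular bipartite multigraph with parts $X=\{x_1,\dots,x_n\}$ and $Y=\{y_1,\dots,y_n\}$ obtained by identifying, for each $j\in[n]$, the points $v_{D(j-1)+1},\dots,v_{Dj}$ into the vertex $x_j$ and the points $w_{D(j-1)+1},\dots,w_{Dj}$ into the vertex $y_j$; each pair of $F$ becomes an edge (parallel edges allowed). An induced matching of size $k$ in $\pi(F)$ is a set of $k$ pairwise vertex-disjoint edges such that the sub-multigraph of $\pi(F)$ induced on their $2k$ endpoints consists exactly of these $k$ edges (each of multiplicity one). $\ln$ is the natural logarithm. *)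

From HB Require Import structures.
From mathcomp Require Import all_boot all_order all_fingroup all_algebra.
From mathcomp Require Import all_classical all_reals all_analysis.
Set Implicit Arguments. Unset Strict Implicit. Unset Printing Implicit Defensive.
Import Order.TTheory GRing.Theory Num.Theory.

(* A configuration of order n and degree D is a perfect matching between
   V_n = {v_0,...,v_{nD-1}} and W_n = {w_0,...,w_{nD-1}} (0-indexed);
   we encode it as the bijection F : 'I_(n*D) -> 'I_(n*D), v_i matched to w_(F i).
   Point v_i is identified into vertex x_(i %/ D), point w_j into y_(j %/ D). *)
Definition config (D n : nat) := {perm 'I_(n * D)}.

Definition mult (D n : nat) (F : config D n) (a b : nat) : nat :=
  #|[set i : 'I_(n * D) | (i %/ D == a) && (F i %/ D == b)]|.

(* S : a set of vertex pairs (x_a, y_b) of pi(F) is an induced matching: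
   edges pairwise vertex-disjoint, and the sub-multigraph induced on the
   endpoints consists exactly of the edges of S, each with multiplicity one
   (pi(F) is bipartite, so only X-Y pairs can carry edges). *)
Definition induced_matching (D n : nat) (F : config D n)
    (S : {set 'I_n * 'I_n}) : bool :=
  [forall p in S, forall q in S,
      (p != q) ==> ((p.1 != q.1) && (p.2 != q.2))] &&
  [forall p in S, forall q in S,
      mult F (val p.1) (val q.2) == (p == q : nat)].

Definition has_induced_matching (D n : nat) (F : config D n) (k : nat) : bool :=
  [exists S : {set 'I_n * 'I_n}, (#|S| == k) && induced_matching F S].

Local Open Scope ring_scope.

Definition kk {R : realType} (D n : nat) : nat :=
  `|Num.ceil (3 * n%:R * ln (D%:R : R) / D%:R)|%N.

Definition proportion {R : realType} (D n : nat) : R :=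
  #|[set F : config D n | has_induced_matching F (@kk R D n)]|%:R
    / ((n * D)`!)%:R.

From HB Require Import structures.
From mathcomp Require Import all_boot all_order all_fingroup all_algebra.
From mathcomp Require Import all_classical all_reals all_analysis.
From mathcomp Require Import ring lra.
Import Order.TTheory GRing.Theory Num.Theory.
Import numFieldNormedType.Exports.

(* If pi(F) has an induced matching with X-side A and Y-side B, |A| = |B| = k,
   then every x_a with a in A sends exactly one of its D points into B, namely
   the endpoint of its matching edge. Recording the offsets h of these points,
   F must map k(D-1) points determined by (A, h) outside the (n-k)D points
   lying over B. A uniform random permutation does so with probability at most
   (1 - k/n)^(k(D-1)), and there are C(n,k)^2 D^k triples (A, B, h), so with
   C(n,k) <= (en/k)^k the proportion is at most
   ((en/k)^2 D (1 - k/n)^(D-1))^k. For k/n >= 3 ln D / D the factor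
   (1 - k/n)^(D-1) <= e^(-3 ln D (D-1)/D) is about D^-3, which makes the base
   at most 3/4, while k grows linearly with n. *)

Lemma ffact_le_expn n k : n ^_ k <= n ^ k.
Proof.
by elim: k => // k IH; rewrite ffactnSr expnSr leq_mul // leq_subr.
Qed.

Lemma ffactM_expn_le c N t : c <= N -> c ^_ t * N ^ t <= c ^ t * N ^_ t.
Proof.
move=> cN; elim: t => [|t IH] //.
rewrite !ffactnSr !expnSr mulnACA [X in _ <= X]mulnACA leq_mul //.
by rewrite mulnBl mulnBr leq_sub2l // mulnC leq_mul2l cN orbT.
Qed.

Lemma card_bigcup_le {I T : finType} (P : {pred I}) (F : I -> {set T}) :
  #|\bigcup_(i in P) F i| <= \sum_(i in P) #|F i|.
Proof.
elim/big_rec2: _ => [|i n U _ leUn]; first by rewrite cards0.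
by rewrite (leq_trans (leq_card_setU (F i) U).1) ?leq_add2l.
Qed.

Section PermutationsMappingInto.
Variable T : finType.
Implicit Types A C : {set T}.

Definition perms_mapping_into A C : {set {perm T}} :=
  [set s : {perm T} | [forall i in A, s i \in C]].

Lemma card_perms_mapping_into A C :
  #|perms_mapping_into A C| <= #|C| ^_ #|A| * (#|T| - #|A|)`!.
Proof.
pose restr (s : {perm T}) : {ffun {x | x \in A} -> T} := [ffun x => s (val x)].
pose injs := [set f : {ffun {x | x \in A} -> T} in ffun_on (mem C) | injectiveb f].
have card_injs : #|injs| = #|C| ^_ #|A| by rewrite card_inj_ffuns_on card_sig.
have card_fix : (#|T| - #|A|)`! = #|perm_on (~: A)|.
  by rewrite card_perm [#|~: A|]cardsCs finset.setCK.
rewrite -card_injs card_fix -sum1_card (partition_big restr (mem injs)); last first.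
  move=> s /[!inE] /forallP s_into; apply/andP; split.
    by apply/ffun_onP => x; rewrite ffunE; apply: (implyP (s_into _)); apply: valP.
  by apply/injectiveP => x y; rewrite !ffunE => /perm_inj /val_inj.
rewrite -sum_nat_const; apply: leq_sum => f _.
case: (pickP [pred s | (s \in perms_mapping_into A C) && (restr s == f)]);
  last by move=> none; rewrite big_pred0.
move=> s0 /andP [_ /eqP s0f].
rewrite sum1_card -(card_imset _ (@mulIg _ s0^-1)%g); apply: subset_leq_card.
apply/fintype.subsetP => _ /imsetP [s /andP [_ /eqP sf] ->].
apply/fintype.subsetP => x; rewrite inE permM finset.in_setC; apply: contraNN => xA.
have : restr s (Sub x xA) = restr s0 (Sub x xA) by rewrite sf s0f.
by rewrite !ffunE /= => ->; rewrite -permM mulgV perm1.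
Qed.

End PermutationsMappingInto.

Arguments perms_mapping_into {T}.

Local Open Scope ring_scope.

Lemma perms_mapping_into_ratio (R : numFieldType) {T : finType} (A C : {set T}) :
  #|perms_mapping_into A C|%:R / (#|T|)`!%:R <= (#|C|%:R / #|T|%:R) ^+ #|A| :> R.
Proof.
set N := #|T|; set c := #|C|; set t := #|A|.
have tN : (t <= N)%N by exact: max_card.
have Nt_gt0 : (0 < N ^_ t)%N by rewrite ffact_gt0.
have NXt_gt0 : (0 < N ^ t)%N := leq_trans Nt_gt0 (ffact_le_expn N t).
rewrite -(ffact_fact tN) natrM.
apply: le_trans (_ : (c ^_ t * (N - t)`!)%:R / ((N ^_ t)%:R * (N - t)`!%:R) <= _).
  by rewrite ler_pM2r ?ler_nat ?card_perms_mapping_into // invr_gt0 mulr_gt0 ?ltr0n ?fact_gt0.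
rewrite natrM invfM mulrACA divff ?mulr1 ?pnatr_eq0 -?lt0n ?fact_gt0 //.
rewrite expr_div_n -!natrX ler_pdivlMr ?ltr0n // mulrAC ler_pdivrMr ?ltr0n //.
by rewrite -!natrM ler_nat ffactM_expn_le // max_card.
Qed.

Section Configurations.
Variables D n : nat.
Hypothesis D_gt0 : (0 < D)%N.

Lemma vertex_subproof (i : 'I_(n * D)) : (i %/ D < n)%N.
Proof. by rewrite ltn_divLR. Qed.

Lemma point_subproof (a : 'I_n) (r : 'I_D) : (a * D + r < n * D)%N.
Proof. by rewrite -ltn_divLR // divnMDl // divn_small ?addn0. Qed.

Definition vertex (i : 'I_(n * D)) : 'I_n := Ordinal (vertex_subproof i).
Definition offset (i : 'I_(n * D)) : 'I_D := Ordinal (ltn_pmod i D_gt0).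
Definition point (a : 'I_n) (r : 'I_D) : 'I_(n * D) := Ordinal (point_subproof a r).

Lemma vertex_point a r : vertex (point a r) = a.
Proof. by apply: val_inj; rewrite /= divnMDl // divn_small ?addn0. Qed.

Lemma offset_point a r : offset (point a r) = r.
Proof. by apply: val_inj; rewrite /= modnMDl modn_small. Qed.

Lemma point_vertex_offset i : point (vertex i) (offset i) = i.
Proof. by apply: val_inj; rewrite /= -divn_eq. Qed.

Lemma point_inj : injective (fun p : 'I_n * 'I_D => point p.1 p.2).
Proof.
move=> [a r] [b s] /= e; congr (_, _).
  by rewrite -(vertex_point a r) e vertex_point.
by rewrite -(offset_point a r) e offset_point.
Qed.

Definition points_of (B : {set 'I_n}) : {set 'I_(n * D)} := [set i | vertex i \in B].

Definition unmatched_points (A : {set 'I_n}) (h : {ffun 'I_n -> 'I_D}) : {set 'I_(n * D)} :=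
  [set i | (vertex i \in A) && (offset i != h (vertex i))].

Definition avoiding (A B : {set 'I_n}) (h : {ffun 'I_n -> 'I_D}) : {set config D n} :=
  perms_mapping_into (unmatched_points A h) (~: points_of B).

Lemma card_points_of B : #|points_of B| = (#|B| * D)%N.
Proof.
have -> : points_of B = [set point p.1 p.2 | p in finset.setX B [set: 'I_D]].
  apply/setP => i; rewrite inE; apply/idP/imsetP => [iB | [[a r] /finset.setXP [aB _] ->]].
    by exists (vertex i, offset i); rewrite ?point_vertex_offset // finset.in_setX iB inE.
  by rewrite vertex_point.
by rewrite card_imset ?cardsX ?cardsT ?card_ord //; exact: point_inj.
Qed.

Lemma card_unmatched_points A h : #|unmatched_points A h| = (#|A| * D.-1)%N.
Proof.
have -> : unmatched_points A h = points_of A :\: [set point a (h a) | a in A].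
  apply/setP => i; rewrite !inE andbC.
  have [iA|] := boolP (vertex i \in A); rewrite ?andbT ?andbF //.
  congr (~~ _); apply/eqP/imsetP => [e | [a _ ->]]; last by rewrite vertex_point offset_point.
  by exists (vertex i); rewrite // -e point_vertex_offset.
rewrite cardsD card_points_of (finset.setIidPr _); last first.
  by apply/fintype.subsetP => _ /imsetP [a aA ->]; rewrite inE vertex_point.
rewrite card_imset; last by move=> a b /(congr1 vertex); rewrite !vertex_point.
by rewrite -subn1 mulnBr muln1.
Qed.

Lemma avoiding_ratio (R : numFieldType) A B h :
  #|avoiding A B h|%:R / (n * D)`!%:R <= ((n - #|B|)%:R / n%:R) ^+ (#|A| * D.-1) :> R.
Proof.
have := perms_mapping_into_ratio R (unmatched_points A h) (~: points_of B).
rewrite [#|~: _|]cardsCs finset.setCK card_points_of card_ord card_unmatched_points.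
by rewrite -mulnBl !natrM invfM mulrACA divff ?mulr1 // pnatr_eq0 -lt0n.
Qed.

Lemma multE F (a b : 'I_n) :
  mult F a b = #|[set i | (vertex i == a) && (vertex (F i) == b)]|.
Proof. by []. Qed.

Section InducedMatching.
Context {F : config D n} {S : {set 'I_n * 'I_n}} (matchS : induced_matching F S).

Lemma induced_matching_disjoint :
  {in S &, forall p q, p != q -> (p.1 != q.1) && (p.2 != q.2)}.
Proof.
case/andP: matchS => /forall_inP disj _ p q pS qS.
by move/forall_inP: (disj p pS) => /(_ q qS) /implyP.
Qed.

Lemma induced_matching_mult :
  {in S &, forall p q, mult F (val p.1) (val q.2) = (p == q)}.
Proof.
case/andP: matchS => _ /forall_inP mS p q pS qS.
by move/forall_inP: (mS p pS) => /(_ q qS) /eqP.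
Qed.

Lemma card_induced_matching_fst : #|[set p.1 | p in S]| = #|S|.
Proof.
apply: card_in_imset => p q pS qS; apply: contra_eq => pq.
by case/andP: (induced_matching_disjoint _ _ pS qS pq).
Qed.

Lemma card_induced_matching_snd : #|[set p.2 | p in S]| = #|S|.
Proof.
apply: card_in_imset => p q pS qS; apply: contra_eq => pq.
by case/andP: (induced_matching_disjoint _ _ pS qS pq).
Qed.

Lemma induced_matching_unique_point i j :
  vertex i = vertex j -> vertex i \in [set p.1 | p in S] ->
  vertex (F i) \in [set p.2 | p in S] -> vertex (F j) \in [set p.2 | p in S] ->
  i = j.
Proof.
move=> eij /imsetP [p pS ip] /imsetP [q qS iq] /imsetP [r rS jr].
have linked x : (0 < mult F (vertex x) (vertex (F x)))%N.
  by rewrite multE card_gt0; apply/set0Pn; exists x; rewrite inE !eqxx.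
have /eqP pq : p == q by rewrite -[p == q]lt0b -induced_matching_mult // -ip -iq linked.
have /eqP pr : p == r by rewrite -[p == r]lt0b -induced_matching_mult // -ip eij -jr linked.
have := induced_matching_mult _ _ pS pS; rewrite eqxx multE => /eqP.
rewrite eqn_leq => /andP [/card_le1_eqP card_le1 _]; apply: card_le1.
  by rewrite inE -eij ip jr pr !eqxx.
by rewrite inE ip iq pq !eqxx.
Qed.

End InducedMatching.

Let r0 : 'I_D := Ordinal D_gt0.

Lemma exists_avoiding_offsets (F : config D n) (A B : {set 'I_n}) :
  (forall i j, vertex i = vertex j -> vertex i \in A ->
     vertex (F i) \in B -> vertex (F j) \in B -> i = j) ->
  exists2 h, h \in pffun_on r0 A [set: 'I_D] & F \in avoiding A B h.
Proof.
move=> unique_link.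
pose link a := [pick i | (vertex i == a) && (vertex (F i) \in B)].
exists [ffun a => if a \in A then oapp offset r0 (link a) else r0].
  apply/pffun_onP; split=> [|a]; last by rewrite inE.
  by apply/fintype.subsetP => a; rewrite !inE ffunE; case: (a \in A); rewrite ?eqxx.
rewrite inE; apply/forall_inP => i /[!inE] /andP [iA]; apply: contra => FiB.
rewrite ffunE iA /link; case: pickP => [j /andP [/eqP ji FjB] | /(_ i)];
  last by rewrite eqxx FiB.
by rewrite (unique_link i j) ?ji.
Qed.

Lemma has_induced_matching_avoiding (F : config D n) k :
  has_induced_matching F k ->
  exists A B : {set 'I_n}, [/\ #|A| = k, #|B| = k &
    exists2 h, h \in pffun_on r0 A [set: 'I_D] & F \in avoiding A B h].
Proof.
case/existsP => S /andP [/eqP <- matchS].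
exists [set p.1 | p in S], [set p.2 | p in S].
split; [exact: card_induced_matching_fst matchS | exact: card_induced_matching_snd matchS |].
apply: exists_avoiding_offsets => i j; exact: induced_matching_unique_point matchS i j.
Qed.

Lemma has_induced_matching_cover k :
  [set F : config D n | has_induced_matching F k] \subset
  \bigcup_(A in [set A : {set 'I_n} | #|A| == k])
    \bigcup_(B in [set B : {set 'I_n} | #|B| == k])
      \bigcup_(h in pffun_on r0 A [set: 'I_D]) avoiding A B h.
Proof.
apply/fintype.subsetP => F /[!inE].
case/has_induced_matching_avoiding => A [B [cA cB [h hA FAB]]].
apply/bigcupP; exists A; rewrite ?inE ?cA //; apply/bigcupP; exists B; rewrite ?inE ?cB //.
by apply/bigcupP; exists h.
Qed.

Lemma has_induced_matching_ratio (R : numFieldType) k :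
  #|[set F : config D n | has_induced_matching F k]|%:R / (n * D)`!%:R <=
  ('C(n, k) ^ 2 * D ^ k)%:R * ((n - k)%:R / n%:R) ^+ (k * D.-1) :> R.
Proof.
set rho := ((n - k)%:R / n%:R) ^+ (k * D.-1).
pose ksets := [set A : {set 'I_n} | #|A| == k].
apply: le_trans (_ : (\sum_(A in ksets) \sum_(B in ksets)
    \sum_(h in pffun_on r0 A [set: 'I_D]) #|avoiding A B h|)%:R / (n * D)`!%:R <= _).
  rewrite ler_pM2r ?invr_gt0 ?ltr0n ?fact_gt0 // ler_nat.
  apply: leq_trans (subset_leq_card (has_induced_matching_cover k)) _.
  apply: leq_trans (card_bigcup_le ksets _) _; apply: leq_sum => A _.
  apply: leq_trans (card_bigcup_le ksets _) _; apply: leq_sum => B _.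
  exact: card_bigcup_le.
apply: (@le_trans _ _ (\sum_(A in ksets) \sum_(B in ksets)
    \sum_(h in pffun_on r0 A [set: 'I_D]) rho)).
  rewrite natr_sum mulr_suml; apply: ler_sum => A /[!inE] /eqP cA.
  rewrite natr_sum mulr_suml; apply: ler_sum => B /[!inE] /eqP cB.
  rewrite natr_sum mulr_suml; apply: ler_sum => h _.
  by rewrite /rho -{1}cB -cA; exact: avoiding_ratio.
under eq_bigr => A /[!inE] /eqP cA do
  rewrite sumr_const sumr_const card_pffun_on cardsT card_ord cA.
rewrite sumr_const card_draws card_ord -!mulrnA mulrC mulr_natr.
by rewrite mulnn mulnC.
Qed.

End Configurations.

Section ExpBounds.
Variable R : realType.

Lemma expR1_le3 : expR 1 <= 3 :> R.
Proof.
have h1 : 5 / 6 <= expR (- (1 / 6) : R) by have := expR_ge1Dx (- (1 / 6) : R); lra.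
have h6 : (5 / 6) ^+ 6 <= expR (- 1 : R).
  rewrite (_ : (- 1 : R) = 6%:R * (- (1 / 6))); last by lra.
  by rewrite expRM_natl; apply: lerXn2r; rewrite ?nnegrE ?expR_ge0 //; lra.
rewrite -[expR 1]invrK -expRN -[3]invrK lef_pV2 ?posrE ?expR_gt0 //; lra.
Qed.

Lemma expR2_ge4 : 4 <= expR 2 :> R.
Proof.
rewrite -[2]mulr1 expRM_natl (_ : 4 = 2 ^+ 2); last by rewrite expr2; lra.
by apply: lerXn2r; rewrite ?nnegrE ?expR_ge0 //; have := expR_ge1Dx (1 : R); lra.
Qed.

Lemma expR2_le9 : expR 2 <= 9 :> R.
Proof.
rewrite -[2]mulr1 expRM_natl (_ : 9 = 3 ^+ 2); last by rewrite expr2; lra.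
by apply: lerXn2r; rewrite ?nnegrE ?expR_ge0 ?expR1_le3 //.
Qed.

Lemma ln_ge2 (d : R) : 9 <= d -> 2 <= ln d.
Proof.
move=> d9; rewrite -[2 in X in X <= _]expRK ler_ln ?posrE ?expR_gt0 //; last lra.
by apply: le_trans expR2_le9 d9.
Qed.

Lemma three_ln_le (d : R) : 12 <= d -> 3 * ln d <= d.
Proof.
move=> d12; have e4 := expR2_ge4; have e_gt0 : 0 < expR 2 := expR_gt0 2.
have : ln (1 + (d / expR 2 - 1)) <= d / expR 2 - 1.
  by apply: le_ln1Dx; rewrite ltrBrDl subrr divr_gt0 //; lra.
rewrite addrC subrK ln_div ?posrE // ?expRK; last lra.
have : d / expR 2 <= d / 4 by rewrite ler_pM2l ?lef_pV2 ?posrE //; lra.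
lra.
Qed.

Lemma expn_le_expR_fact (k : nat) : k%:R ^+ k <= expR k%:R * k`!%:R :> R.
Proof.
case: k => [|k]; first by rewrite expr0 expR0 mul1r.
rewrite -ler_pdivrMr ?ltr0n ?fact_gt0 //.
by apply: le_trans (expR_ge1Dxn k (ler0n R k.+1)); rewrite lerDr.
Qed.

Lemma bin_le_expR (n k : nat) : (0 < k)%N ->
  'C(n, k)%:R <= (expR 1 * n%:R / k%:R) ^+ k :> R.
Proof.
move=> k_gt0.
rewrite expr_div_n ler_pdivlMr ?exprn_gt0 ?ltr0n // exprMn -expRM_natl mulr1.
apply: (@le_trans _ _ ('C(n, k)%:R * (expR k%:R * k`!%:R))).
  by rewrite ler_wpM2l ?expn_le_expR_fact.
rewrite mulrCA -natrM bin_ffact ler_wpM2l ?expR_ge0 // -natrX ler_nat.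
exact: ffact_le_expn.
Qed.

(* [rate D (k/n) ^+ k] dominates C(n,k)^2 D^k (1 - k/n)^(k(D-1)), by bin_le_expR. *)
Definition rate (D : nat) (x : R) : R := (expR 1 / x) ^+ 2 * D%:R * (1 - x) ^+ D.-1.

Lemma rate_ge0 D x : x <= 1 -> 0 <= rate D x.
Proof.
move=> x1; rewrite mulr_ge0 ?exprn_ge0 //; last by rewrite subr_ge0.
by rewrite mulr_ge0 ?sqr_ge0.
Qed.

Lemma rate_le (D : nat) (x : R) : (12 <= D)%N ->
  3 * ln D%:R / D%:R <= x -> x <= 1 -> rate D x <= 3 / 4.
Proof.
move=> D12 ax x1; rewrite /rate.
set d : R := D%:R in ax *; set L := ln d in ax *; set a := 3 * L / d in ax.
have d12 : 12 <= d by rewrite /d (ler_nat R 12).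
have L2 : 2 <= L by apply: ln_ge2; lra.
have L3 : 3 * L <= d by exact: three_ln_le.
have a_gt0 : 0 < a by rewrite divr_gt0 //; lra.
have a1 : a <= 1 by rewrite ler_pdivrMr; lra.
have x_gt0 : 0 < x by apply: lt_le_trans ax.
have pow_le : (1 - x) ^+ D.-1 <= expR a / d ^+ 3.
  have D1 : D.-1%:R = d - 1 :> R.
    by rewrite /d -[in RHS](prednK (leq_trans _ D12)) // -natr1 addrK.
  apply: (@le_trans _ _ (expR (- x) ^+ D.-1)).
    by apply: lerXn2r; rewrite ?nnegrE ?expR_ge0 //; [lra | have := expR_ge1Dx (- x); lra].
  have dL : expR (3 * L) = d ^+ 3 by rewrite -[3]/(3%:R) expRM_natl lnK // posrE; lra.
  rewrite -expRM_natl -dL -expRB ler_expR D1.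
  have -> : a - 3 * L = (d - 1) * - a by rewrite /a; field; lra.
  by rewrite ler_wpM2l ?lerN2 //; lra.
have sq_le : (expR 1 / x) ^+ 2 <= (expR 1 / a) ^+ 2.
  apply: lerXn2r; rewrite ?nnegrE ?divr_ge0 ?expR_ge0 //; try lra.
  by rewrite ler_pM2l ?expR_gt0 // lef_pV2.
apply: (@le_trans _ _ ((expR 1 / a) ^+ 2 * d * (expR a / d ^+ 3))).
  apply: ler_pM => //; first by rewrite mulr_ge0 ?sqr_ge0 ?ler0n.
    by apply: exprn_ge0; lra.
  by rewrite ler_pM2r //; lra.
have -> : (expR 1 / a) ^+ 2 * d * (expR a / d ^+ 3) = expR 1 ^+ 2 * expR a / (9 * L ^+ 2).
  by rewrite /a; field; lra.
have ea : expR a <= 3 by apply: le_trans expR1_le3; rewrite ler_expR.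
have e9 : expR 1 ^+ 2 <= 9 :> R by rewrite -expRM_natl mulr1 expR2_le9.
have := expR_gt0 a; rewrite ler_pdivrMr; last by nra.
nra.
Qed.

End ExpBounds.

Arguments rate {R}.

Local Open Scope classical_set_scope.

Section Asymptotics.
Variables (R : realType) (D : nat).
Hypothesis D12 : (12 <= D)%N.

Let D_gt0 : (0 < D)%N := leq_trans (isT : (0 < 12)%N) D12.

Let lnD_ge2 : 2 <= ln D%:R :> R.
Proof. by apply: ln_ge2; rewrite (ler_nat R 9) (leq_trans _ D12). Qed.

Lemma kk_ge n : 3 * n%:R * ln D%:R / D%:R <= (@kk R D n)%:R :> R.
Proof.
rewrite /kk natr_absz ger0_norm ?ceil_ge // ceil_ge0.
apply: lt_le_trans (_ : -1 < 0) _; first by rewrite ltrN10.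
by rewrite divr_ge0 ?mulr_ge0 ?ler0n ?ln_ge0 // ler1n.
Qed.

Lemma kk_mul_ge n : (n <= @kk R D n * D)%N.
Proof.
rewrite -(ler_nat R) natrM; apply: le_trans (ler_wpM2r (ler0n _ _) (kk_ge n)).
rewrite divfK ?pnatr_eq0 -?lt0n //; have := lnD_ge2; have := ler0n R n; nra.
Qed.

Lemma proportion_le_pow n : (0 < n)%N -> @proportion R D n <= (3 / 4) ^+ @kk R D n.
Proof.
move=> n_gt0; set k := @kk R D n.
rewrite /proportion -/k; apply: le_trans (has_induced_matching_ratio D n D_gt0 R k) _.
have [kn | nk] := leqP k n; last first.
  by rewrite bin_small // exp0n // mul0n mul0r exprn_ge0 // divr_ge0.
have k_gt0 : (0 < k)%N.
  rewrite -(ltr0n R); apply: lt_le_trans (kk_ge n).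
  by rewrite divr_gt0 ?mulr_gt0 ?ltr0n //; apply: lt_le_trans lnD_ge2.
have n_pos : 0 < n%:R :> R by rewrite ltr0n.
set x : R := k%:R / n%:R.
have ax : 3 * ln D%:R / D%:R <= x.
  rewrite /x ler_pdivlMr //; apply: le_trans (kk_ge n).
  by rewrite mulrAC (mulrAC 3).
have x1 : x <= 1 by rewrite /x ler_pdivrMr // mul1r ler_nat.
have -> : (n - k)%:R / n%:R = 1 - x by rewrite natrB // mulrBl divff // gt_eqF.
apply: (@le_trans _ _ (rate D x ^+ k)); last first.
  by apply: lerXn2r; rewrite ?nnegrE ?rate_ge0 ?rate_le //; lra.
have ex : expR 1 / x = expR 1 * n%:R / k%:R by rewrite /x invf_div mulrA.
have -> : rate D x ^+ k = ((expR 1 / x) ^+ k) ^+ 2 * D%:R ^+ k * (1 - x) ^+ (k * D.-1).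
  by rewrite /rate exprAC mulnC exprM -!exprMn.
rewrite natrM !natrX ler_wpM2r ?exprn_ge0 ?subr_ge0 // ler_wpM2r ?exprn_ge0 ?ler0n //.
by rewrite lerXn2r ?nnegrE ?exprn_ge0 ?ler0n ?divr_ge0 ?expR_ge0 ?ex ?bin_le_expR //; lra.
Qed.

Lemma kk_cvg : (@kk R D) @ \oo --> \oo.
Proof.
apply/cvgnyPge => m; near=> n.
rewrite -(leq_pmul2r D_gt0); apply: leq_trans (kk_mul_ge n).
by near: n; apply: nbhs_infty_ge.
Unshelve. all: end_near. Qed.

End Asymptotics.

Theorem lemma4p4 (R : realType) (D : nat) (hD : (21 <= D)%N) :
  (fun n : nat => @proportion R D n) @ \oo --> (0 : R).
Proof.
have D12 : (12 <= D)%N by apply: leq_trans hD.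
apply: (@squeeze_cvgr _ _ _ _ (fun=> 0) (fun n => (3 / 4) ^+ @kk R D n)).
- near=> n; rewrite divr_ge0 ?ler0n //= proportion_le_pow //.
  by near: n; apply: nbhs_infty_gt.
- exact: cvg_cst.
- apply: (cvg_comp _ _ (kk_cvg R D D12)); apply: cvg_expr.
  by rewrite ger0_norm; lra.
Unshelve. all: end_near. Qed.
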